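(* Let $T$ be a complete affine $L$-theory and let $M\models T$ be compact (as a metric space). Then every extreme type $p\in E_n(T)$ is realized in $M$.
   Context: Affine continuous logic: structures are complete metric spaces of diameter $\le1$ with Lipschitz interpretations; affine formulas built from atomic $1,d(t_1,t_2),R(\bar t)$ by $+$, real scalars, $\sup$, $\inf$. An $n$-type of $T$ is a positive linear functional $p$ with $p(1)=1$ on the space of affine formulas in $n$ free variables modulo $T$-equivalence (ordered by $0\le\phi$ iff $T\models0\le\inf_{\bar x}\phi$); $K_n(T)$ is the compact convex set of $n$-types, $E_n(T)$ its set of extreme points. $\bar a\in M$ realizes $p$ if $p(\phi)=\phi^M(\bar a)$ for all $\phi$. *)

From Stdlib Require Import Reals List.
From Stdlib Require Fin.
From Coquelicot Require Import Rbar Lub.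
Open Scope R_scope.

(** A (metric) language: function and relation symbols with arities and
    Lipschitz constants (with respect to the max metric on M^k). *)
Record language : Type := {
  fsym : Type;
  farity : fsym -> nat;
  flip : fsym -> R;
  rsym : Type;
  rarity : rsym -> nat;
  rlip : rsym -> R
}.

Section Syntax.
Variable L : language.

Inductive term (n : nat) : Type :=
| tvar : Fin.t n -> term n
| tapp : forall f : fsym L, (Fin.t (farity L f) -> term n) -> term n.

(** Affine formulas with free variables among x_0, ..., x_{n-1}:
    built from 1, d(t1,t2), R(t) by +, real scalars, sup, inf.
    The quantifiers bind the new variable (index Fin.F1). *)
Inductive formula : nat -> Type :=
| fone : forall n, formula n
| fdist : forall n, term n -> term n -> formula n
| frel : forall n (P : rsym L), (Fin.t (rarity L P) -> term n) -> formula n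
| fadd : forall n, formula n -> formula n -> formula n
| fscale : forall n, R -> formula n -> formula n
| fsup : forall n, formula (S n) -> formula n
| finf : forall n, formula (S n) -> formula n.

End Syntax.

Arguments tvar {L n}.
Arguments tapp {L n}.
Arguments fone {L n}.
Arguments fdist {L n}.
Arguments frel {L n}.
Arguments fadd {L n}.
Arguments fscale {L n}.
Arguments fsup {L n}.
Arguments finf {L n}.

Definition cauchy {M : Type} (d : M -> M -> R) (u : nat -> M) : Prop :=
  forall eps, 0 < eps -> exists N, forall m k, (N <= m)%nat -> (N <= k)%nat ->
    d (u m) (u k) < eps.

Definition converges_to {M : Type} (d : M -> M -> R) (u : nat -> M) (x : M) : Prop :=
  forall eps, 0 < eps -> exists N, forall m, (N <= m)%nat -> d (u m) x < eps.

Record structure (L : language) : Type := {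
  carrier :> Type;
  point : carrier;                         (* structures are nonempty *)
  dist : carrier -> carrier -> R;
  dist_nonneg : forall x y, 0 <= dist x y;
  dist_eq0 : forall x y, dist x y = 0 <-> x = y;
  dist_sym : forall x y, dist x y = dist y x;
  dist_tri : forall x y z, dist x z <= dist x y + dist y z;
  dist_diam : forall x y, dist x y <= 1;
  complete : forall u : nat -> carrier, cauchy dist u ->
               exists x, converges_to dist u x;
  finterp : forall f : fsym L, (Fin.t (farity L f) -> carrier) -> carrier;
  rinterp : forall P : rsym L, (Fin.t (rarity L P) -> carrier) -> R;
  finterp_lip : forall f a b delta,
      (forall i, dist (a i) (b i) <= delta) ->
      dist (finterp f a) (finterp f b) <= flip L f * delta;
  rinterp_lip : forall P a b delta,
      (forall i, dist (a i) (b i) <= delta) ->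
      Rabs (rinterp P a - rinterp P b) <= rlip L P * delta
}.

Arguments point {L}.
Arguments dist {L}.
Arguments finterp {L}.
Arguments rinterp {L}.

Definition metric_open {L} (M : structure L) (U : M -> Prop) : Prop :=
  forall x, U x -> exists eps, 0 < eps /\ forall y, dist M x y < eps -> U y.

Definition compact_structure {L} (M : structure L) : Prop :=
  forall (I : Type) (U : I -> M -> Prop),
    (forall i, metric_open M (U i)) ->
    (forall x, exists i, U i x) ->
    exists l : list I, forall x : M, exists i, In i l /\ U i x.

(** Supremum of a real function over a nonempty set (it is bounded for
    every function arising as the value of a formula). *)
Definition supR {M : Type} (f : M -> R) : R :=
  real (Lub_Rbar (fun r => exists x, r = f x)).
Definition infR {M : Type} (f : M -> R) : R := - supR (fun x => - f x).

Definition scons {M : Type} {n : nat} (x : M) (a : Fin.t n -> M) : Fin.t (S n) -> M :=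
  fun i => Fin.caseS' i (fun _ => M) x a.

Section Semantics.
Variables (L : language) (M : structure L).

Fixpoint teval {n} (a : Fin.t n -> M) (t : term L n) : M :=
  match t with
  | tvar i => a i
  | tapp f args => finterp M f (fun i => teval a (args i))
  end.

Fixpoint eval {n} (phi : formula L n) : (Fin.t n -> M) -> R :=
  match phi in formula _ k return (Fin.t k -> M) -> R with
  | fone _ => fun _ => 1
  | fdist _ t1 t2 => fun a => dist M (teval a t1) (teval a t2)
  | frel _ P args => fun a => rinterp M P (fun i => teval a (args i))
  | fadd _ phi1 phi2 => fun a => eval phi1 a + eval phi2 a
  | fscale _ r phi1 => fun a => r * eval phi1 a
  | fsup _ phi1 => fun a => supR (fun x : M => eval phi1 (scons x a))
  | finf _ phi1 => fun a => infR (fun x : M => eval phi1 (scons x a))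
  end.

End Semantics.

Arguments teval {L} M {n}.
Arguments eval {L} M {n}.

Definition sentence (L : language) := formula L 0.

Definition empty_assignment {M : Type} : Fin.t 0 -> M :=
  fun i => Fin.case0 (fun _ => M) i.

Definition sent_value {L} (M : structure L) (phi : sentence L) : R :=
  eval M phi empty_assignment.

(** An affine theory is a set of conditions "0 <= phi", phi a sentence. *)
Definition theory (L : language) := sentence L -> Prop.

Definition models {L} (M : structure L) (T : theory L) : Prop :=
  forall phi, T phi -> 0 <= sent_value M phi.

Definition complete_theory {L} (T : theory L) : Prop :=
  (exists M : structure L, models M T) /\
  forall phi : sentence L, exists r : R,
    forall M : structure L, models M T -> sent_value M phi = r.

Definition T_nonneg {L} (T : theory L) {n} (phi : formula L n) : Prop :=
  forall M : structure L, models M T -> forall a : Fin.t n -> M, 0 <= eval M phi a.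

Definition T_equiv {L} (T : theory L) {n} (phi psi : formula L n) : Prop :=
  forall M : structure L, models M T -> forall a : Fin.t n -> M,
    eval M phi a = eval M psi a.

(** An n-type of T: a positive linear functional p with p(1) = 1 on the space
    of affine formulas in n variables modulo T-equivalence, represented as a
    function on formulas that is constant on T-equivalence classes. *)
Record is_type {L} (T : theory L) (n : nat) (p : formula L n -> R) : Prop := {
  type_equiv : forall phi psi, T_equiv T phi psi -> p phi = p psi;
  type_add : forall phi psi, p (fadd phi psi) = p phi + p psi;
  type_scale : forall r phi, p (fscale r phi) = r * p phi;
  type_pos : forall phi, T_nonneg T phi -> 0 <= p phi;
  type_one : p fone = 1
}.

Definition extreme_type {L} (T : theory L) (n : nat) (p : formula L n -> R) : Prop :=
  is_type T n p /\
  forall (q1 q2 : formula L n -> R) (t : R),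
    is_type T n q1 -> is_type T n q2 -> 0 < t < 1 ->
    (forall phi, p phi = t * q1 phi + (1 - t) * q2 phi) ->
    forall phi, q1 phi = p phi /\ q2 phi = p phi.

Definition realizes {L} (M : structure L) {n} (a : Fin.t n -> M) (p : formula L n -> R) : Prop :=
  forall phi : formula L n, p phi = eval M phi a.

(* Write K for M^n. As T is complete, a formula that is nonnegative on K is nonnegative in
   every model of T, so every type p satisfies p(phi) <= sup_S phi for S = K; call p
   supported on S when this holds. If an extreme type is supported on S1 ∪ S2, Hahn–Banach
   for the sublinear functional (x1, x2) |-> max (sup_S1 x1, sup_S2 x2) splits p into two
   positive functionals living on S1 and S2; normalised, they are types, and extremality
   makes p supported on S1 or on S2. If p were not realized, the open sets {psi < -1} with
   p(psi) = 0 would cover the compact set K; by a finite subcover and the splitting, p is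
   supported on one of them, so p(psi) <= -1. *)

From Stdlib Require Import Reals Lra Psatz List Bool FunctionalExtensionality ClassicalEpsilon Classical.
From Coquelicot Require Import Rcomplements Rbar Lub.
From mathcomp Require classical_sets boolp.
Open Scope R_scope.

Lemma preorder_maximal (T : Type) (t0 : T) (R : T -> T -> Prop) :
  (forall t, R t t) -> (forall r s t, R r s -> R s t -> R r t) ->
  (forall A : T -> Prop, (forall s t, A s -> A t -> R s t \/ R t s) ->
      exists t, forall s, A s -> R s t) ->
  exists t, forall s, R t s -> R s t.
Proof.
  intros Hrefl Htrans Hchain.
  assert (E : forall a b, R a b <-> boolp.asbool (R a b) = true)
    by (intros a b; apply reflect_iff, boolp.asboolP).
  destruct (@classical_sets.ZL_preorder T t0 (fun a b => boolp.asbool (R a b))) as [t Hmax].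
  - intro t. apply E, Hrefl.
  - intros r s u H1 H2. apply E. apply E in H1, H2. eauto.
  - intros A HA. destruct (Hchain A) as [t Ht].
    + intros s u Hs Hu. destruct (HA s u Hs Hu); [left|right]; apply E; assumption.
    + exists t. intros s Hs. apply E; auto.
  - exists t. intros s Hs. apply E, Hmax, E, Hs.
Qed.

Section HahnBanach.
Variable Z : Type.

Definition vadd (x y : Z -> R) : Z -> R := fun z => x z + y z.
Definition vscale (c : R) (x : Z -> R) : Z -> R := fun z => c * x z.
Definition vzero : Z -> R := fun _ => 0.

Record subspace (E : (Z -> R) -> Prop) : Prop := {
  subspace0 : E vzero;
  subspaceD : forall x y, E x -> E y -> E (vadd x y);
  subspaceZ : forall c x, E x -> E (vscale c x)
}.

Record linear_on (E : (Z -> R) -> Prop) (g : (Z -> R) -> R) : Prop := {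
  linearD : forall x y, E x -> E y -> g (vadd x y) = g x + g y;
  linearZ : forall c x, E x -> g (vscale c x) = c * g x
}.

Record sublinear_on (E : (Z -> R) -> Prop) (s : (Z -> R) -> R) : Prop := {
  sublinearD : forall x y, E x -> E y -> s (vadd x y) <= s x + s y;
  sublinearZ : forall c x, 0 < c -> E x -> s (vscale c x) = c * s x
}.

Ltac vext := apply functional_extensionality; intro; unfold vadd, vscale, vzero; ring.

Variables (W : (Z -> R) -> Prop) (s : (Z -> R) -> R).
Hypothesis W_subspace : subspace W.
Hypothesis s_sublinear : sublinear_on W s.
Variables (D : (Z -> R) -> Prop) (f : (Z -> R) -> R).
Hypothesis D_subspace : subspace D.
Hypothesis D_sub_W : forall x, D x -> W x.
Hypothesis f_linear : linear_on D f.
Hypothesis f_le_s : forall x, D x -> f x <= s x.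

Record extension := mkext { ext_dom : (Z -> R) -> Prop; ext_fun : (Z -> R) -> R }.

Record admissible (e : extension) : Prop := {
  adm_subspace : subspace (ext_dom e);
  adm_contains_D : forall x, D x -> ext_dom e x;
  adm_within_W : forall x, ext_dom e x -> W x;
  adm_linear : linear_on (ext_dom e) (ext_fun e);
  adm_extends_f : forall x, D x -> ext_fun e x = f x;
  adm_le_s : forall x, ext_dom e x -> ext_fun e x <= s x
}.

Definition extends (e e' : extension) : Prop :=
  (forall x, ext_dom e x -> ext_dom e' x) /\
  (forall x, ext_dom e x -> ext_fun e' x = ext_fun e x).

Lemma admissible_base : admissible (mkext D f).
Proof. constructor; simpl; auto. Qed.

Section ChainUnion.
Variable A : {e | admissible e} -> Prop.
Hypothesis A_chain : forall a b, A a -> A b ->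
  extends (proj1_sig a) (proj1_sig b) \/ extends (proj1_sig b) (proj1_sig a).
Variable t0 : {e | admissible e}.
Hypothesis t0_in_A : A t0.

Definition chain_dom (x : Z -> R) : Prop := exists t, A t /\ ext_dom (proj1_sig t) x.

Definition chain_fun (x : Z -> R) : R := epsilon (inhabits 0)
  (fun v => exists t, A t /\ ext_dom (proj1_sig t) x /\ ext_fun (proj1_sig t) x = v).

Lemma chain_fun_eq t x : A t -> ext_dom (proj1_sig t) x -> chain_fun x = ext_fun (proj1_sig t) x.
Proof.
  intros Ht Hx. unfold chain_fun.
  destruct (epsilon_spec (inhabits 0)
       (fun v => exists t, A t /\ ext_dom (proj1_sig t) x /\ ext_fun (proj1_sig t) x = v))
    as [t' [Ht' [Hx' <-]]]; [exists (ext_fun (proj1_sig t) x), t; auto|].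
  destruct (A_chain t t' Ht Ht') as [[_ H]|[_ H]]; auto. symmetry; auto.
Qed.

Lemma chain_dom_common x y : chain_dom x -> chain_dom y ->
  exists t, A t /\ ext_dom (proj1_sig t) x /\ ext_dom (proj1_sig t) y.
Proof.
  intros [t1 [Ht1 Hx]] [t2 [Ht2 Hy]].
  destruct (A_chain t1 t2 Ht1 Ht2) as [[H _]|[H _]]; [exists t2|exists t1]; auto.
Qed.

Lemma chain_admissible : admissible (mkext chain_dom chain_fun).
Proof.
  constructor; simpl.
  - constructor.
    + exists t0. split; auto. apply (adm_subspace _ (proj2_sig t0)).
    + intros x y Hx Hy. destruct (chain_dom_common x y Hx Hy) as [t [Ht [H1 H2]]].
      exists t. split; auto. apply (adm_subspace _ (proj2_sig t)); auto.
    + intros c x [t [Ht Hx]]. exists t. split; auto. apply (adm_subspace _ (proj2_sig t)); auto.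
  - intros x Hx. exists t0. split; auto. apply (adm_contains_D _ (proj2_sig t0)); auto.
  - intros x [t [Ht Hx]]. apply (adm_within_W _ (proj2_sig t)); auto.
  - constructor.
    + intros x y Hx Hy. destruct (chain_dom_common x y Hx Hy) as [t [Ht [H1 H2]]].
      destruct (proj2_sig t) as [Hsub _ _ Hlin _ _].
      rewrite !(chain_fun_eq t) by (auto; apply Hsub; auto). apply Hlin; auto.
    + intros c x [t [Ht Hx]].
      destruct (proj2_sig t) as [Hsub _ _ Hlin _ _].
      rewrite !(chain_fun_eq t) by (auto; apply Hsub; auto). apply Hlin; auto.
  - intros x Hx. rewrite (chain_fun_eq t0) by (auto; apply (adm_contains_D _ (proj2_sig t0)); auto).
    apply (adm_extends_f _ (proj2_sig t0)); auto.
  - intros x [t [Ht Hx]]. rewrite (chain_fun_eq t) by auto. apply (adm_le_s _ (proj2_sig t)); auto.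
Qed.

End ChainUnion.

Lemma admissible_chain_ub (A : {e | admissible e} -> Prop) :
  (forall a b, A a -> A b ->
     extends (proj1_sig a) (proj1_sig b) \/ extends (proj1_sig b) (proj1_sig a)) ->
  exists t : {e | admissible e}, forall u, A u -> extends (proj1_sig u) (proj1_sig t).
Proof.
  intros Hchain.
  destruct (classic (exists t, A t)) as [[t0 Ht0]|Hempty].
  - exists (exist _ _ (chain_admissible A Hchain t0 Ht0)). intros u Hu. split; simpl.
    + intros x Hx. exists u; auto.
    + intros x Hx. apply (chain_fun_eq A Hchain u); auto.
  - exists (exist _ _ admissible_base). intros u Hu. exfalso; eauto.
Qed.

Section OneStep.
Variables (E : (Z -> R) -> Prop) (g : (Z -> R) -> R) (x0 : Z -> R).
Hypothesis Eg_admissible : admissible (mkext E g).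
Hypothesis x0_in_W : W x0.
Hypothesis x0_notin_E : ~ E x0.

Let E_subspace : subspace E := adm_subspace _ Eg_admissible.
Let E_sub_W : forall x, E x -> W x := adm_within_W _ Eg_admissible.
Let g_linear : linear_on E g := adm_linear _ Eg_admissible.
Let g_le_s : forall x, E x -> g x <= s x := adm_le_s _ Eg_admissible.

(* The value [c] to give to [x0] must satisfy [g y - s (y - x0) <= c <= s (y + x0) - g y]
   for all [y] in [E]; subadditivity of [s] makes the left bounds lie below the right ones. *)
Lemma one_step_value : exists c, forall y, E y ->
  g y - s (vadd y (vscale (-1) x0)) <= c /\ c <= s (vadd y x0) - g y.
Proof.
  set (mx := vscale (-1) x0).
  assert (Hmx : W mx) by (apply W_subspace; auto).
  assert (key : forall y1 y2, E y1 -> E y2 -> g y1 - s (vadd y1 mx) <= s (vadd y2 x0) - g y2).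
  { intros y1 y2 H1 H2.
    assert (Hsum : vadd y1 y2 = vadd (vadd y1 mx) (vadd y2 x0)) by (unfold mx; vext).
    assert (Ha : g (vadd y1 y2) <= s (vadd y1 y2)) by (apply g_le_s, E_subspace; auto).
    rewrite (linearD _ _ g_linear) in Ha by auto. rewrite Hsum in Ha.
    assert (s (vadd (vadd y1 mx) (vadd y2 x0)) <= s (vadd y1 mx) + s (vadd y2 x0))
      by (apply s_sublinear; apply W_subspace; auto).
    lra. }
  set (A := fun r => exists y, E y /\ r = g y - s (vadd y mx)).
  destruct (completeness A) as [c [Hub Hleast]].
  - exists (s (vadd vzero x0) - g vzero). intros r [y [Hy ->]]. apply key; auto. apply E_subspace.
  - exists (g vzero - s (vadd vzero mx)), vzero. split; auto. apply E_subspace.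
  - exists c. intros y Hy. split.
    + apply Hub. exists y; auto.
    + apply Hleast. intros r [y1 [Hy1 ->]]. apply key; auto.
Qed.

Lemma one_step_unique y1 t1 y2 t2 : E y1 -> E y2 ->
  vadd y1 (vscale t1 x0) = vadd y2 (vscale t2 x0) -> t1 = t2 /\ y1 = y2.
Proof.
  intros H1 H2 Heq.
  assert (Hpt : forall z, y1 z + t1 * x0 z = y2 z + t2 * x0 z)
    by (intro z; exact (f_equal (fun h => h z) Heq)).
  destruct (Req_dec t1 t2) as [<-|Ht].
  - split; auto. apply functional_extensionality. intro z. specialize (Hpt z). lra.
  - exfalso. apply x0_notin_E.
    replace x0 with (vscale (/ (t1 - t2)) (vadd y2 (vscale (-1) y1))).
    + apply E_subspace, E_subspace, E_subspace; auto.
    + apply functional_extensionality. intro z. unfold vscale, vadd. specialize (Hpt z).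
      apply Rmult_eq_reg_l with (t1 - t2); [|lra]. field_simplify; lra.
Qed.

(* Scaling [y + t x0] by [1/|t|] reduces the bound to one of the two inequalities on [c]. *)
Lemma one_step_le_s c y t :
  (forall y, E y -> g y - s (vadd y (vscale (-1) x0)) <= c /\ c <= s (vadd y x0) - g y) ->
  E y -> g y + t * c <= s (vadd y (vscale t x0)).
Proof.
  intros Hc Hy.
  destruct (Rtotal_order t 0) as [Hlt|[->|Hgt]].
  - set (y' := vscale (/ - t) y).
    assert (Hy' : E y') by (apply E_subspace; auto).
    destruct (Hc y' Hy') as [Hc' _].
    assert (e1 : g y = - t * g y')
      by (unfold y'; rewrite (linearZ _ _ g_linear); [field; lra|auto]).
    assert (e2 : vadd y (vscale t x0) = vscale (- t) (vadd y' (vscale (-1) x0)))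
      by (unfold y'; apply functional_extensionality; intro; unfold vadd, vscale; field; lra).
    rewrite e2, (sublinearZ _ _ s_sublinear)
      by (try lra; apply W_subspace; auto; apply W_subspace; auto).
    rewrite e1. nra.
  - replace (vadd y (vscale 0 x0)) with y by vext. rewrite Rmult_0_l, Rplus_0_r. auto.
  - set (y' := vscale (/ t) y).
    assert (Hy' : E y') by (apply E_subspace; auto).
    destruct (Hc y' Hy') as [_ Hc'].
    assert (e1 : g y = t * g y') by (unfold y'; rewrite (linearZ _ _ g_linear); [field; lra|auto]).
    assert (e2 : vadd y (vscale t x0) = vscale t (vadd y' x0))
      by (unfold y'; apply functional_extensionality; intro; unfold vadd, vscale; field; lra).
    rewrite e2, (sublinearZ _ _ s_sublinear) by (auto; apply W_subspace; auto).
    rewrite e1. nra.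
Qed.

Definition step_dom (z : Z -> R) : Prop := exists y t, E y /\ z = vadd y (vscale t x0).

Definition step_fun (c : R) (z : Z -> R) : R := epsilon (inhabits 0)
  (fun v => exists y t, E y /\ z = vadd y (vscale t x0) /\ v = g y + t * c).

Lemma step_fun_eq c y t : E y -> step_fun c (vadd y (vscale t x0)) = g y + t * c.
Proof.
  intros Hy. unfold step_fun.
  destruct (epsilon_spec (inhabits 0) (fun v => exists y1 t1, E y1 /\
              vadd y (vscale t x0) = vadd y1 (vscale t1 x0) /\ v = g y1 + t1 * c))
    as [y1 [t1 [H1 [H2 ->]]]]; [exists (g y + t * c), y, t; auto|].
  destruct (one_step_unique y t y1 t1 Hy H1 H2) as [-> ->]. reflexivity.
Qed.

Lemma one_step_extension :
  exists e', admissible e' /\ extends (mkext E g) e' /\ ext_dom e' x0.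
Proof.
  destruct one_step_value as [c Hc].
  assert (Hy0 : forall y, y = vadd y (vscale 0 x0)) by (intros; vext).
  exists (mkext step_dom (step_fun c)). split; [constructor; simpl|split; [split|]; simpl].
  - constructor.
    + exists vzero, 0. split; [apply E_subspace|vext].
    + intros z1 z2 [y1 [t1 [H1 ->]]] [y2 [t2 [H2 ->]]].
      exists (vadd y1 y2), (t1 + t2). split; [apply E_subspace; auto|vext].
    + intros a z [y [t [H ->]]]. exists (vscale a y), (a * t). split; [apply E_subspace; auto|vext].
  - intros x Hx. exists x, 0. split; [apply Eg_admissible; auto|vext].
  - intros z [y [t [H ->]]]. apply W_subspace; auto. apply W_subspace; auto.
  - constructor.
    + intros z1 z2 [y1 [t1 [H1 ->]]] [y2 [t2 [H2 ->]]].
      replace (vadd (vadd y1 (vscale t1 x0)) (vadd y2 (vscale t2 x0)))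
        with (vadd (vadd y1 y2) (vscale (t1 + t2) x0)) by vext.
      rewrite !step_fun_eq, (linearD _ _ g_linear) by (auto; apply E_subspace; auto). ring.
    + intros a z [y [t [H ->]]].
      replace (vscale a (vadd y (vscale t x0)))
        with (vadd (vscale a y) (vscale (a * t) x0)) by vext.
      rewrite !step_fun_eq, (linearZ _ _ g_linear) by (auto; apply E_subspace; auto). ring.
  - intros x Hx. assert (HxE : E x) by (apply Eg_admissible; auto).
    rewrite (Hy0 x) at 1. rewrite step_fun_eq, (adm_extends_f _ Eg_admissible) by auto. ring.
  - intros z [y [t [H ->]]]. rewrite step_fun_eq by auto. apply one_step_le_s; auto.
  - intros x Hx. exists x, 0. split; [auto|vext].
  - intros x Hx. rewrite (Hy0 x) at 1. rewrite step_fun_eq by auto. ring.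
  - exists vzero, 1. split; [apply E_subspace|vext].
Qed.

End OneStep.

Theorem hahn_banach : exists F, linear_on W F /\ (forall x, D x -> F x = f x) /\
  (forall x, W x -> F x <= s x).
Proof.
  destruct (@preorder_maximal {e | admissible e} (exist _ _ admissible_base)
              (fun a b => extends (proj1_sig a) (proj1_sig b)))
    as [[[E g] Hadm] Hmax].
  - intro t. split; auto.
  - intros a b c [H1 H2] [H3 H4]. split; auto. intros x Hx. rewrite H4 by auto. auto.
  - exact admissible_chain_ub.
  - assert (HEW : forall x, W x -> E x).
    { intros x Hx. apply NNPP. intro Hn.
      destruct (one_step_extension E g x Hadm Hx Hn) as [e' [Hadm' [Hext Hx']]].
      destruct (Hmax (exist _ e' Hadm') Hext) as [H _]. exact (Hn (H x Hx')). }
    exists g. split; [|split].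
    + destruct (adm_linear _ Hadm) as [HD HZ]. split; intros; [apply HD|apply HZ]; apply HEW; auto.
    + exact (adm_extends_f _ Hadm).
    + intros x Hx. apply (adm_le_s _ Hadm), HEW, Hx.
Qed.

End HahnBanach.

Arguments vadd {Z}.
Arguments vscale {Z}.
Arguments vzero {Z}.
Arguments subspace {Z}.
Arguments subspace0 {Z E}.
Arguments subspaceD {Z E}.
Arguments subspaceZ {Z E}.
Arguments linear_on {Z}.
Arguments linearD {Z E g}.
Arguments linearZ {Z E g}.
Arguments sublinear_on {Z}.
Arguments sublinearD {Z E s}.
Arguments sublinearZ {Z E s}.

Section Suprema.
Variables (X : Type) (x0 : X) (B : R).

Lemma supR_spec (f : X -> R) : (forall x, f x <= B) ->
  (forall x, f x <= supR f) /\ (forall c, (forall x, f x <= c) -> supR f <= c).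
Proof.
  intros HB. unfold supR.
  destruct (Lub_Rbar_correct (fun r => exists x, r = f x)) as [Hub Hleast].
  assert (Hup : Rbar_le (Lub_Rbar (fun r => exists x, r = f x)) (Finite B)).
  { apply Hleast. intros r [x ->]. apply HB. }
  assert (Hlo : Rbar_le (Finite (f x0)) (Lub_Rbar (fun r => exists x, r = f x)))
    by (apply Hub; exists x0; auto).
  destruct (Lub_Rbar (fun r => exists x, r = f x)) as [l| |]; simpl in *; try contradiction.
  split.
  - intros x. exact (Hub (f x) (ex_intro _ x eq_refl)).
  - intros c Hc. apply (Hleast (Finite c)). intros r [x ->]. apply Hc.
Qed.

Lemma supR_abs_le (f : X -> R) : (forall x, Rabs (f x) <= B) -> Rabs (supR f) <= B.
Proof.
  intros HB. assert (HB' : forall x, - B <= f x <= B) by (intro; apply Rabs_le_between, HB).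
  destruct (supR_spec f) as [H1 H2]; [intro x; apply HB'|].
  specialize (H1 x0). specialize (H2 B (fun x => proj2 (HB' x))). specialize (HB' x0).
  apply Rabs_le_between. lra.
Qed.

Lemma supR_dist_le (f g : X -> R) e :
  (forall x, Rabs (f x) <= B) -> (forall x, Rabs (g x) <= B) ->
  (forall x, Rabs (f x - g x) <= e) -> Rabs (supR f - supR g) <= e.
Proof.
  intros Hf Hg Hd.
  destruct (supR_spec f) as [F1 F2]; [intro x; apply (proj1 (Rabs_le_between _ _) (Hf x))|].
  destruct (supR_spec g) as [G1 G2]; [intro x; apply (proj1 (Rabs_le_between _ _) (Hg x))|].
  assert (supR f <= supR g + e).
  { apply F2. intro x. specialize (G1 x). specialize (Hd x). apply Rabs_le_between in Hd. lra. }
  assert (supR g <= supR f + e).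
  { apply G2. intro x. specialize (F1 x). specialize (Hd x). apply Rabs_le_between in Hd. lra. }
  apply Rabs_le_between. lra.
Qed.

Lemma infR_ge0 (f : X -> R) : (forall x, Rabs (f x) <= B) ->
  0 <= infR f <-> forall x, 0 <= f x.
Proof.
  intros HB. unfold infR.
  destruct (supR_spec (fun x => - f x)) as [H1 H2].
  { intro x. specialize (HB x). apply Rabs_le_between in HB. lra. }
  split.
  - intros H x. specialize (H1 x). simpl in H1. lra.
  - intros H. assert (supR (fun x => - f x) <= 0) by (apply H2; intro x; specialize (H x); lra).
    lra.
Qed.

End Suprema.

Section SupOn.
Variables (Z : Type) (S : Z -> Prop).
Hypothesis S_nonempty : exists z, S z.

Definition bounded (x : Z -> R) : Prop := exists B, forall z, Rabs (x z) <= B.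

Definition sup_on (x : Z -> R) : R := supR (fun w : {z | S z} => x (proj1_sig w)).

Lemma bounded_subspace : subspace bounded.
Proof.
  constructor.
  - exists 0. intro z. unfold vzero. rewrite Rabs_R0. lra.
  - intros x y [Bx Hx] [By Hy]. exists (Bx + By). intro z. unfold vadd.
    eapply Rle_trans; [apply Rabs_triang|]. specialize (Hx z). specialize (Hy z). lra.
  - intros c x [Bx Hx]. exists (Rabs c * Bx). intro z. unfold vscale. rewrite Rabs_mult.
    apply Rmult_le_compat_l; [apply Rabs_pos|auto].
Qed.

Lemma sup_on_spec x : bounded x ->
  (forall z, S z -> x z <= sup_on x) /\ (forall c, (forall z, S z -> x z <= c) -> sup_on x <= c).
Proof.
  intros [B HB]. destruct S_nonempty as [z0 Hz0].
  destruct (supR_spec _ (exist _ z0 Hz0) B (fun w : {z | S z} => x (proj1_sig w))) as [H1 H2].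
  { intros [z Hz]. simpl. apply (proj1 (Rabs_le_between _ _) (HB z)). }
  split.
  - intros z Hz. apply (H1 (exist _ z Hz)).
  - intros c Hc. apply H2. intros [z Hz]. simpl. auto.
Qed.

Lemma sup_on_sublinear : sublinear_on bounded sup_on.
Proof.
  constructor.
  - intros x y Hx Hy.
    destruct (sup_on_spec x Hx) as [X1 _]. destruct (sup_on_spec y Hy) as [Y1 _].
    apply (sup_on_spec _ (subspaceD bounded_subspace x y Hx Hy)).
    intros z Hz. unfold vadd. specialize (X1 z Hz). specialize (Y1 z Hz). lra.
  - intros c x Hc Hx.
    assert (Hcx : bounded (vscale c x)) by (apply bounded_subspace; auto).
    destruct (sup_on_spec x Hx) as [X1 X2]. destruct (sup_on_spec _ Hcx) as [C1 C2].
    apply Rle_antisym.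
    + apply C2. intros z Hz. unfold vscale. specialize (X1 z Hz). nra.
    + assert (sup_on x <= sup_on (vscale c x) / c).
      { apply X2. intros z Hz. specialize (C1 z Hz). unfold vscale in C1.
        apply (Rmult_le_reg_l c); [auto|].
        replace (c * (sup_on (vscale c x) / c)) with (sup_on (vscale c x)) by (field; lra).
        exact C1. }
      apply (Rmult_le_compat_l c) in H; [|lra].
      replace (c * (sup_on (vscale c x) / c)) with (sup_on (vscale c x)) in H by (field; lra).
      exact H.
Qed.

End SupOn.

Arguments bounded {Z}.
Arguments sup_on {Z}.
Arguments bounded_subspace {Z}.
Arguments sup_on_spec {Z S}.
Arguments sup_on_sublinear {Z S}.

Lemma scons_eta {X : Type} {n} (c : Fin.t (S n) -> X) :
  c = scons (c Fin.F1) (fun i => c (Fin.FS i)).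
Proof. apply functional_extensionality. intro i. pattern i. apply Fin.caseS'; reflexivity. Qed.

Lemma fin0_empty_assignment {X : Type} (a : Fin.t 0 -> X) : a = empty_assignment.
Proof. apply functional_extensionality. intro i. apply (Fin.case0 (fun i => a i = _) i). Qed.

Lemma fin_uniform_bound m (P : Fin.t m -> R -> Prop) :
  (forall i C C', C <= C' -> P i C -> P i C') -> (forall i, exists C, 0 <= C /\ P i C) ->
  exists C, 0 <= C /\ forall i, P i C.
Proof.
  induction m as [|m IH]; intros Hmono Hex.
  - exists 0. split; [lra|]. intro i. apply (Fin.case0 (fun i => P i 0) i).
  - destruct (IH (fun i => P (Fin.FS i))) as [C [HC HP]]; [intros; eapply Hmono; eauto|auto|].
    destruct (Hex Fin.F1) as [C1 [HC1 HP1]].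
    exists (Rmax C C1). split; [eapply Rle_trans; [apply HC|apply Rmax_l]|].
    intro i. pattern i. apply Fin.caseS'.
    + eapply Hmono; [apply Rmax_r|auto].
    + intro j. eapply Hmono; [apply Rmax_l|auto].
Qed.

Lemma Rabs_dist_sub_le {L} (N : structure L) x y x' y' :
  Rabs (dist N x y - dist N x' y') <= dist N x x' + dist N y y'.
Proof.
  apply Rabs_le_between.
  pose proof (dist_tri L N x x' y). pose proof (dist_tri L N x' y' y).
  pose proof (dist_tri L N x' x y'). pose proof (dist_tri L N x y y').
  pose proof (dist_sym L N x x'). pose proof (dist_sym L N y y').
  lra.
Qed.

Section Semantics.
Variables (L : language) (N : structure L).

Definition assign_close {n} (a b : Fin.t n -> N) (d : R) : Prop :=
  forall i, dist N (a i) (b i) <= d.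

Lemma assign_close_scons {n} (x : N) (a b : Fin.t n -> N) d :
  0 <= d -> assign_close a b d -> assign_close (scons x a) (scons x b) d.
Proof.
  intros Hd Hab i. pattern i. apply Fin.caseS'; [|exact Hab].
  simpl. rewrite (proj2 (dist_eq0 L N x x) eq_refl). exact Hd.
Qed.

Lemma eval_bounded n (phi : formula L n) : exists B, forall a, Rabs (eval N phi a) <= B.
Proof.
  induction phi as [n|n t1 t2|n P args|n phi1 IH1 phi2 IH2|n r phi IH|n phi IH|n phi IH]; simpl.
  - exists 1. intros. rewrite Rabs_R1. lra.
  - exists 1. intros. rewrite Rabs_pos_eq by apply dist_nonneg. apply dist_diam.
  - set (y0 := fun _ : Fin.t (rarity L P) => point N).
    exists (Rabs (rinterp N P y0) + Rabs (rlip L P)). intro a.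
    pose proof (rinterp_lip L N P (fun i => teval N a (args i)) y0 1 (fun i => dist_diam L N _ _)).
    pose proof (Rle_abs (rlip L P * 1)). rewrite Rmult_1_r in *.
    pose proof (Rabs_triang (rinterp N P (fun i => teval N a (args i)) - rinterp N P y0)
                            (rinterp N P y0)).
    replace (rinterp N P (fun i => teval N a (args i)) - rinterp N P y0 + rinterp N P y0)
      with (rinterp N P (fun i => teval N a (args i))) in * by ring.
    lra.
  - destruct IH1 as [B1 H1], IH2 as [B2 H2]. exists (B1 + B2). intro a.
    eapply Rle_trans; [apply Rabs_triang|]. specialize (H1 a); specialize (H2 a); lra.
  - destruct IH as [B H]. exists (Rabs r * B). intro a. rewrite Rabs_mult.
    apply Rmult_le_compat_l; [apply Rabs_pos|auto].
  - destruct IH as [B H]. exists B. intro a. apply (supR_abs_le _ (point N)). intro x. apply H.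
  - destruct IH as [B H]. exists B. intro a. unfold infR. rewrite Rabs_Ropp.
    apply (supR_abs_le _ (point N)). intro x. rewrite Rabs_Ropp. apply H.
Qed.

Definition term_lipschitz_with {n} (t : term L n) (C : R) : Prop :=
  forall a b d, 0 <= d -> assign_close a b d -> dist N (teval N a t) (teval N b t) <= C * d.

Definition lipschitz_with {n} (F : (Fin.t n -> N) -> R) (C : R) : Prop :=
  forall a b d, 0 <= d -> assign_close a b d -> Rabs (F a - F b) <= C * d.

Lemma terms_uniform_lipschitz n m (args : Fin.t m -> term L n) :
  (forall i, exists C, 0 <= C /\ term_lipschitz_with (args i) C) ->
  exists C, 0 <= C /\ forall i, term_lipschitz_with (args i) C.
Proof.
  apply fin_uniform_bound.
  intros i C C' HCC' H a b d Hd Hab. eapply Rle_trans; [apply (H a b d Hd Hab)|nra].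
Qed.

Lemma teval_lipschitz n (t : term L n) : exists C, 0 <= C /\ term_lipschitz_with t C.
Proof.
  induction t as [i|f args IH].
  - exists 1. split; [lra|]. intros a b d Hd Hab. simpl. rewrite Rmult_1_l. apply Hab.
  - destruct (terms_uniform_lipschitz _ _ args IH) as [C [HC HP]].
    exists (Rabs (flip L f) * C). split; [apply Rmult_le_pos; auto; apply Rabs_pos|].
    intros a b d Hd Hab. simpl.
    eapply Rle_trans; [apply finterp_lip; intro i; apply (HP i a b d Hd Hab)|].
    rewrite Rmult_assoc. apply Rmult_le_compat_r; [apply Rmult_le_pos; auto|apply Rle_abs].
Qed.

Lemma lipschitz_opp n (F : (Fin.t n -> N) -> R) C :
  lipschitz_with F C -> lipschitz_with (fun a => - F a) C.
Proof.
  intros H a b d Hd Hab. replace (- F a - - F b) with (- (F a - F b)) by ring.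
  rewrite Rabs_Ropp. auto.
Qed.

Lemma lipschitz_sup n (F : (Fin.t (S n) -> N) -> R) B C :
  (forall c, Rabs (F c) <= B) -> lipschitz_with F C ->
  lipschitz_with (fun a => supR (fun x => F (scons x a))) C.
Proof.
  intros HB HF a b d Hd Hab.
  apply (supR_dist_le _ (point N) B); try (intro; apply HB).
  intro x. apply HF; auto. apply assign_close_scons; auto.
Qed.

Lemma eval_lipschitz n (phi : formula L n) : exists C, 0 <= C /\ lipschitz_with (eval N phi) C.
Proof.
  induction phi as [n|n t1 t2|n P args|n phi1 IH1 phi2 IH2|n r phi IH|n phi IH|n phi IH].
  - exists 0. split; [lra|]. intros a b d _ _. simpl. replace (1 - 1) with 0 by ring.
    rewrite Rabs_R0. lra.
  - destruct (teval_lipschitz n t1) as [C1 [HC1 H1]], (teval_lipschitz n t2) as [C2 [HC2 H2]].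
    exists (C1 + C2). split; [lra|]. intros a b d Hd Hab.
    eapply Rle_trans; [apply Rabs_dist_sub_le|].
    specialize (H1 a b d Hd Hab). specialize (H2 a b d Hd Hab). lra.
  - destruct (terms_uniform_lipschitz _ _ args (fun i => teval_lipschitz n (args i)))
      as [C [HC HP]].
    exists (Rabs (rlip L P) * C). split; [apply Rmult_le_pos; auto; apply Rabs_pos|].
    intros a b d Hd Hab.
    eapply Rle_trans; [apply rinterp_lip; intro i; apply (HP i a b d Hd Hab)|].
    rewrite Rmult_assoc. apply Rmult_le_compat_r; [apply Rmult_le_pos; auto|apply Rle_abs].
  - destruct IH1 as [C1 [HC1 H1]], IH2 as [C2 [HC2 H2]].
    exists (C1 + C2). split; [lra|]. intros a b d Hd Hab.
    specialize (H1 a b d Hd Hab). specialize (H2 a b d Hd Hab). simpl.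
    replace (eval N phi1 a + eval N phi2 a - (eval N phi1 b + eval N phi2 b))
      with ((eval N phi1 a - eval N phi1 b) + (eval N phi2 a - eval N phi2 b)) by ring.
    eapply Rle_trans; [apply Rabs_triang|]. lra.
  - destruct IH as [C [HC H]]. exists (Rabs r * C).
    split; [apply Rmult_le_pos; auto; apply Rabs_pos|].
    intros a b d Hd Hab. simpl. rewrite <- Rmult_minus_distr_l, Rabs_mult, Rmult_assoc.
    apply Rmult_le_compat_l; [apply Rabs_pos|auto].
  - destruct IH as [C [HC H]], (eval_bounded _ phi) as [B HB].
    exists C. split; auto. exact (lipschitz_sup _ _ B C HB H).
  - destruct IH as [C [HC H]], (eval_bounded _ phi) as [B HB].
    exists C. split; auto.
    apply lipschitz_opp, (lipschitz_sup _ (fun c => - eval N phi c) B C).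
    + intro c. rewrite Rabs_Ropp. apply HB.
    + apply lipschitz_opp, H.
Qed.

Fixpoint inf_closure (n : nat) : formula L n -> sentence L :=
  match n return formula L n -> sentence L with
  | 0 => fun phi => phi
  | S n' => fun phi => inf_closure n' (finf phi)
  end.

Lemma inf_closure_ge0 n (phi : formula L n) :
  0 <= sent_value N (inf_closure n phi) <-> forall a, 0 <= eval N phi a.
Proof.
  revert phi. induction n as [|n IH]; intro phi; simpl.
  - unfold sent_value. split; [intros H a; rewrite (fin0_empty_assignment a)|]; auto.
  - rewrite IH. simpl. destruct (eval_bounded _ phi) as [B HB].
    split.
    + intros H c. rewrite (scons_eta c). specialize (H (fun i => c (Fin.FS i))).
      rewrite (infR_ge0 _ (point N) B) in H by (intro; apply HB). apply H.
    + intros H a. rewrite (infR_ge0 _ (point N) B) by (intro; apply HB). intro x. apply H.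
Qed.

End Semantics.

(* In a complete theory, [inf_x phi] has the same value in all models. *)
Lemma complete_T_nonneg {L} (T : theory L) (M : structure L) : complete_theory T -> models M T ->
  forall n (phi : formula L n), (forall a, 0 <= eval M phi a) -> T_nonneg T phi.
Proof.
  intros [_ HT] HM n phi H N HN.
  destruct (HT (inf_closure L n phi)) as [r Hr].
  apply inf_closure_ge0. rewrite (Hr N HN), <- (Hr M HM). apply inf_closure_ge0, H.
Qed.

Lemma list_min_pos {A : Type} (r : A -> R) (l : list A) :
  exists e, 0 < e /\ forall x, In x l -> 0 < r x -> e <= r x.
Proof.
  induction l as [|x l [e [He Hle]]].
  - exists 1. split; [lra|]. intros _ [].
  - destruct (Rlt_dec 0 (r x)) as [Hx|Hx].
    + exists (Rmin (r x) e). split; [apply Rmin_pos; auto|].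
      intros y [<-|Hy] Hy0; [apply Rmin_l|eapply Rle_trans; [apply Rmin_r|auto]].
    + exists e. split; auto. intros y [<-|Hy] Hy0; [contradiction|auto].
Qed.

Section CompactTuples.
Variables (L : language) (M : structure L).

Definition tuple_open {n} (U : (Fin.t n -> M) -> Prop) : Prop :=
  forall a, U a -> exists e, 0 < e /\ forall b, (forall i, dist M (a i) (b i) < e) -> U b.

Definition tuples_compact (n : nat) : Prop :=
  forall (I : Type) (U : I -> (Fin.t n -> M) -> Prop), (forall i, tuple_open (U i)) ->
    (forall a, exists i, U i a) -> exists l : list I, forall a, exists i, In i l /\ U i a.

Lemma tuples_compact_0 : tuples_compact 0.
Proof.
  intros I U HU Hcov. destruct (Hcov empty_assignment) as [i Hi].
  exists (i :: nil). intro a. exists i. split; [left; auto|].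
  rewrite (fin0_empty_assignment a). exact Hi.
Qed.

Lemma tube_lemma n (I : Type) (U : I -> (Fin.t (S n) -> M) -> Prop) :
  tuples_compact n -> (forall i, tuple_open (U i)) -> (forall a, exists i, U i a) ->
  forall x, exists r l, 0 < r /\
    forall y, dist M x y < r -> forall b, exists i, In i l /\ U i (scons y b).
Proof.
  intros Hn HU Hcov x.
  set (V := fun (ie : I * R) (a : Fin.t n -> M) => 0 < snd ie /\ exists eta, 0 < eta /\
              forall y b, dist M x y < snd ie ->
                (forall j, dist M (a j) (b j) < eta) -> U (fst ie) (scons y b)).
  destruct (Hn _ V) as [l Hl].
  - intros ie a [Hr [eta [Heta H]]]. exists (eta / 2). split; [lra|].
    intros a' Ha'. split; auto. exists (eta / 2). split; [lra|].
    intros y b Hy Hb. apply H; auto. intro j.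
    pose proof (dist_tri L M (a j) (a' j) (b j)). specialize (Ha' j). specialize (Hb j). lra.
  - intro a. destruct (Hcov (scons x a)) as [i Hi].
    destruct (HU i _ Hi) as [e [He Hb]].
    exists (i, e). split; auto. exists e. split; auto. simpl.
    intros y b Hy Hab. apply Hb. intro j. pattern j. apply Fin.caseS'; simpl; auto.
  - destruct (list_min_pos snd l) as [r [Hr Hle]].
    exists r, (map fst l). split; auto. intros y Hy b.
    destruct (Hl b) as [ie [Hie [Hpos [eta [Heta H]]]]].
    exists (fst ie). split; [apply in_map; auto|].
    apply H.
    + eapply Rlt_le_trans; [apply Hy|]. apply Hle; auto.
    + intro j. rewrite (proj2 (dist_eq0 L M _ _) eq_refl). auto.
Qed.

Lemma tuples_compact_S n : compact_structure M -> tuples_compact n -> tuples_compact (S n).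
Proof.
  intros HM Hn I U HU Hcov.
  set (V := fun (q : M * R * list I) (y : M) => dist M (fst (fst q)) y < snd (fst q) /\
          forall y', dist M (fst (fst q)) y' < snd (fst q) ->
            forall b, exists i, In i (snd q) /\ U i (scons y' b)).
  destruct (HM _ V) as [qs Hqs].
  - intros [[x r] l] y [Hy Htube]. simpl in *. exists (r - dist M x y). split; [lra|].
    intros z Hz. split; auto. simpl. pose proof (dist_tri L M x y z). lra.
  - intro y. destruct (tube_lemma n I U Hn HU Hcov y) as [r [l [Hr Htube]]].
    exists (y, r, l). split; auto. simpl. rewrite (proj2 (dist_eq0 L M _ _) eq_refl). exact Hr.
  - exists (flat_map snd qs). intro c. rewrite (scons_eta c).
    destruct (Hqs (c Fin.F1)) as [[[x r] l] [Hin [Hd Htube]]]. simpl in *.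
    destruct (Htube _ Hd (fun i => c (Fin.FS i))) as [i [Hi HUi]].
    exists i. split; auto. apply in_flat_map. exists (x, r, l). auto.
Qed.

Lemma compact_tuples : compact_structure M -> forall n, tuples_compact n.
Proof.
  intros HM n. induction n; [apply tuples_compact_0|apply tuples_compact_S; auto].
Qed.

End CompactTuples.

Section Supports.
Variables (L : language) (T : theory L) (M : structure L) (n : nat).
Hypothesis T_complete : complete_theory T.
Hypothesis M_models : models M T.

Definition supported (S : (Fin.t n -> M) -> Prop) (q : formula L n -> R) : Prop :=
  forall phi c, (forall b, S b -> eval M phi b <= c) -> q phi <= c.

Lemma supported_mono (S S' : (Fin.t n -> M) -> Prop) q :
  supported S q -> (forall b, S b -> S' b) -> supported S' q.
Proof. intros H HS phi c Hc. apply H. auto. Qed.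

Section Types.
Variables (p : formula L n -> R).
Hypothesis p_type : is_type T n p.

Lemma type_eval_ext phi psi : (forall b, eval M phi b = eval M psi b) -> p phi = p psi.
Proof.
  intros H. apply p_type. intros N HN a.
  assert (H1 := complete_T_nonneg T M T_complete M_models n (fadd phi (fscale (-1) psi))).
  assert (H2 := complete_T_nonneg T M T_complete M_models n (fadd psi (fscale (-1) phi))).
  simpl in H1, H2.
  assert (A1 : 0 <= eval N phi a + -1 * eval N psi a) by (apply H1; auto; intro b; rewrite H; lra).
  assert (A2 : 0 <= eval N psi a + -1 * eval N phi a) by (apply H2; auto; intro b; rewrite H; lra).
  lra.
Qed.

Lemma type_supported_all : supported (fun _ => True) p.
Proof.
  intros phi c Hc.
  assert (A : 0 <= p (fadd (fscale c fone) (fscale (-1) phi))).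
  { apply p_type, (complete_T_nonneg T M T_complete M_models). intro b.
    simpl. specialize (Hc b I). lra. }
  rewrite (type_add _ _ _ p_type), !(type_scale _ _ _ p_type), (type_one _ _ _ p_type) in A.
  lra.
Qed.

Lemma type_supported_nonempty S : supported S p -> exists b, S b.
Proof.
  intros H. apply NNPP. intro Hempty.
  assert (A : p fone <= 0) by (apply H; intros b Hb; exfalso; eauto).
  rewrite (type_one _ _ _ p_type) in A. lra.
Qed.

End Types.

(* [concentrated_le] makes [r] both positive and living on [S]; its mass is [r fone]. *)
Record concentrated (S : (Fin.t n -> M) -> Prop) (r : formula L n -> R) : Prop := {
  concentratedD : forall phi psi, r (fadd phi psi) = r phi + r psi;
  concentratedZ : forall c phi, r (fscale c phi) = c * r phi;
  concentrated_le : forall phi c, (forall b, S b -> eval M phi b <= c) -> r phi <= c * r fone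
}.

Section Concentrated.
Variables (S : (Fin.t n -> M) -> Prop) (r : formula L n -> R).
Hypothesis r_conc : concentrated S r.

Lemma concentrated_ge0 phi : (forall b, 0 <= eval M phi b) -> 0 <= r phi.
Proof.
  intros H. assert (A : r (fscale (-1) phi) <= 0 * r fone).
  { apply r_conc. intros b _. simpl. specialize (H b). lra. }
  rewrite (concentratedZ _ _ r_conc) in A. lra.
Qed.

Lemma concentrated_ext phi psi : (forall b, eval M phi b = eval M psi b) -> r phi = r psi.
Proof.
  intros H.
  assert (A : forall phi psi, (forall b, eval M phi b = eval M psi b) -> r phi <= r psi).
  { clear phi psi H. intros phi psi H.
    assert (A : 0 <= r (fadd psi (fscale (-1) phi))).
    { apply concentrated_ge0. intro b. simpl. rewrite H. lra. }
    rewrite (concentratedD _ _ r_conc), (concentratedZ _ _ r_conc) in A. lra. }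
  apply Rle_antisym; apply A; auto.
Qed.

Lemma concentrated_zero phi : r fone = 0 -> r phi = 0.
Proof.
  intros H0. destruct (eval_bounded L M n phi) as [B HB].
  assert (A1 : r phi <= B * r fone).
  { apply r_conc. intros b _. apply (proj1 (Rabs_le_between _ _) (HB b)). }
  assert (A2 : r (fscale (-1) phi) <= B * r fone).
  { apply r_conc. intros b _. simpl. specialize (HB b). apply Rabs_le_between in HB. lra. }
  rewrite (concentratedZ _ _ r_conc) in A2. rewrite H0 in A1, A2. lra.
Qed.

Lemma concentrated_normalized_type : 0 < r fone -> is_type T n (fun phi => r phi / r fone).
Proof.
  intros Hpos. constructor.
  - intros phi psi Heq. f_equal. apply concentrated_ext. intro b. apply Heq, M_models.
  - intros phi psi. rewrite (concentratedD _ _ r_conc). field. lra.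
  - intros c phi. rewrite (concentratedZ _ _ r_conc). field. lra.
  - intros phi Hphi. apply Rmult_le_pos; [|left; apply Rinv_0_lt_compat; auto].
    apply concentrated_ge0. intro b. apply Hphi, M_models.
  - field. lra.
Qed.

Lemma concentrated_normalized_supported : 0 < r fone -> supported S (fun phi => r phi / r fone).
Proof.
  intros Hpos phi c Hc. apply (Rmult_le_reg_l (r fone)); auto.
  replace (r fone * (r phi / r fone)) with (r phi) by (field; lra).
  rewrite Rmult_comm. apply r_conc, Hc.
Qed.

End Concentrated.

Definition diag (phi : formula L n) : (Fin.t n -> M) + (Fin.t n -> M) -> R :=
  fun z => match z with inl b | inr b => eval M phi b end.

Definition embed (j : bool) (phi : formula L n) : (Fin.t n -> M) + (Fin.t n -> M) -> R :=
  fun z => match z, j with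
           | inl b, true | inr b, false => eval M phi b
           | _, _ => 0
           end.

Ltac sum_ext := apply functional_extensionality; intros [b|b];
  unfold diag, embed, vadd, vscale; simpl; ring.

Lemma diag_vadd phi psi : vadd (diag phi) (diag psi) = diag (fadd phi psi).
Proof. sum_ext. Qed.

Lemma diag_vscale c phi : vscale c (diag phi) = diag (fscale c phi).
Proof. sum_ext. Qed.

Lemma embed_vadd j phi psi : vadd (embed j phi) (embed j psi) = embed j (fadd phi psi).
Proof. destruct j; sum_ext. Qed.

Lemma embed_vscale j c phi : vscale c (embed j phi) = embed j (fscale c phi).
Proof. destruct j; sum_ext. Qed.

Lemma diag_embed phi : diag phi = vadd (embed true phi) (embed false phi).
Proof. sum_ext. Qed.

Lemma embed_bounded j phi : bounded (embed j phi).
Proof.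
  destruct (eval_bounded L M n phi) as [B HB]. exists (Rabs B).
  intros [b|b]; destruct j; simpl;
    solve [rewrite Rabs_R0; apply Rabs_pos | eapply Rle_trans; [apply HB|apply Rle_abs]].
Qed.

Lemma diag_bounded phi : bounded (diag phi).
Proof. rewrite diag_embed. apply bounded_subspace; apply embed_bounded. Qed.

Section Split.
Variables (S1 S2 : (Fin.t n -> M) -> Prop) (p : formula L n -> R).
Hypothesis p_type : is_type T n p.
Hypothesis p_supported : supported (fun b => S1 b \/ S2 b) p.

Definition sum_support (z : (Fin.t n -> M) + (Fin.t n -> M)) : Prop :=
  match z with inl b => S1 b | inr b => S2 b end.

Definition diag_value (x : (Fin.t n -> M) + (Fin.t n -> M) -> R) : R :=
  p (epsilon (inhabits fone) (fun phi => x = diag phi)).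

Lemma diag_value_diag phi : diag_value (diag phi) = p phi.
Proof.
  unfold diag_value. apply (type_eval_ext p p_type). intro b.
  assert (H := epsilon_spec (inhabits fone) (fun psi => diag phi = diag psi)
                            (ex_intro _ phi eq_refl)).
  exact (f_equal (fun x => x (inl b)) (eq_sym H)).
Qed.

(* A pair of functions on [K] is a function on [K + K]. Hahn–Banach extends
   [diag phi |-> p phi] below [sup_on sum_support]; the restrictions of the extension to
   the two copies of [K] split [p]. *)
Lemma concentrated_split :
  exists r1 r2, concentrated S1 r1 /\ concentrated S2 r2 /\ forall phi, p phi = r1 phi + r2 phi.
Proof.
  assert (Hne : exists z, sum_support z).
  { destruct (type_supported_nonempty p p_type _ p_supported) as [b [Hb|Hb]];
      [exists (inl b)|exists (inr b)]; exact Hb. }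
  destruct (hahn_banach _ bounded (sup_on sum_support) bounded_subspace
              (sup_on_sublinear Hne) (fun x => exists phi, x = diag phi) diag_value)
    as [F [HF [HFD HFs]]].
  - constructor.
    + exists (fscale 0 fone).
      apply functional_extensionality. intros [b|b]; unfold vzero; simpl; ring.
    + intros x y [phi ->] [psi ->]. exists (fadd phi psi). apply diag_vadd.
    + intros c x [phi ->]. exists (fscale c phi). apply diag_vscale.
  - intros x [phi ->]. apply diag_bounded.
  - constructor.
    + intros x y [phi ->] [psi ->]. rewrite diag_vadd, !diag_value_diag. apply p_type.
    + intros c x [phi ->]. rewrite diag_vscale, !diag_value_diag. apply p_type.
  - intros x [phi ->]. rewrite diag_value_diag. apply p_supported.
    destruct (sup_on_spec Hne _ (diag_bounded phi)) as [Hub _].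
    intros b [Hb|Hb]; [apply (Hub (inl b))|apply (Hub (inr b))]; exact Hb.
  - assert (Hr : forall j : bool, concentrated (if j then S1 else S2) (fun phi => F (embed j phi))).
    { intro j. constructor.
      - intros phi psi. rewrite <- embed_vadd. apply HF; apply embed_bounded.
      - intros c phi. rewrite <- embed_vscale. apply HF, embed_bounded.
      - intros phi c Hc.
        assert (A : F (embed j (fadd phi (fscale (-c) fone))) <= 0).
        { eapply Rle_trans; [apply HFs, embed_bounded|].
          apply (sup_on_spec Hne _ (embed_bounded _ _)).
          intros [b|b] Hb; destruct j; simpl in *; try lra; specialize (Hc b Hb); lra. }
        rewrite <- embed_vadd, <- embed_vscale in A.
        rewrite (linearD HF), (linearZ HF) in A
          by (try apply bounded_subspace; apply embed_bounded).
        lra. }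
    exists (fun phi => F (embed true phi)), (fun phi => F (embed false phi)).
    split; [exact (Hr true)|split; [exact (Hr false)|]].
    intro phi. rewrite <- diag_value_diag, <- HFD by eauto. rewrite diag_embed.
    apply HF; apply embed_bounded.
Qed.

End Split.

Section Extreme.
Variable p : formula L n -> R.
Hypothesis p_extreme : extreme_type T n p.

Let p_type : is_type T n p := proj1 p_extreme.

Lemma extreme_supported_union S1 S2 :
  supported (fun b => S1 b \/ S2 b) p -> supported S1 p \/ supported S2 p.
Proof.
  intros Hsupp.
  destruct (concentrated_split S1 S2 p p_type Hsupp) as [r1 [r2 [H1 [H2 Hsum]]]].
  assert (Hmass : r1 fone + r2 fone = 1) by (rewrite <- Hsum; apply p_type).
  assert (Hone : forall b : Fin.t n -> M, 0 <= eval M fone b) by (intro; simpl; lra).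
  pose proof (concentrated_ge0 _ _ H1 fone Hone).
  pose proof (concentrated_ge0 _ _ H2 fone Hone).
  destruct (Req_dec (r1 fone) 0) as [H10|H10]; [|destruct (Req_dec (r2 fone) 0) as [H20|H20]].
  - right. intros phi c Hc. rewrite Hsum, (concentrated_zero _ _ H1 phi H10), Rplus_0_l.
    replace (r2 phi) with (r2 phi / r2 fone) by (replace (r2 fone) with 1 by lra; field).
    apply (concentrated_normalized_supported _ _ H2); [lra|exact Hc].
  - left. intros phi c Hc. rewrite Hsum, (concentrated_zero _ _ H2 phi H20), Rplus_0_r.
    replace (r1 phi) with (r1 phi / r1 fone) by (replace (r1 fone) with 1 by lra; field).
    apply (concentrated_normalized_supported _ _ H1); [lra|exact Hc].
  - left. intros phi c Hc.
    set (t := r1 fone).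
    assert (Hdecomp : forall psi, p psi = t * (r1 psi / r1 fone) + (1 - t) * (r2 psi / r2 fone)).
    { intro psi. rewrite Hsum. unfold t. replace (1 - r1 fone) with (r2 fone) by lra. field. lra. }
    destruct (proj2 p_extreme _ _ t (concentrated_normalized_type _ _ H1 ltac:(lra))
                (concentrated_normalized_type _ _ H2 ltac:(lra)) ltac:(unfold t; lra)
                Hdecomp phi) as [<- _].
    apply (concentrated_normalized_supported _ _ H1); [lra|exact Hc].
Qed.

Lemma extreme_supported_list (I : Type) (U : I -> (Fin.t n -> M) -> Prop) (l : list I) :
  supported (fun b => exists i, In i l /\ U i b) p -> exists i, In i l /\ supported (U i) p.
Proof.
  induction l as [|i l IH]; intros H.
  - destruct (type_supported_nonempty p p_type _ H) as [b [i [[] _]]].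
  - assert (H' : supported (fun b => U i b \/ exists j, In j l /\ U j b) p).
    { eapply supported_mono; [exact H|]. intros b [j [[<-|Hj] Hu]]; [left|right; exists j]; auto. }
    destruct (extreme_supported_union _ _ H') as [Hi|Hl].
    + exists i. split; [left|]; auto.
    + destruct (IH Hl) as [j [Hj Hs]]. exists j. split; [right|]; auto.
Qed.

Lemma unrealized_witness (a : Fin.t n -> M) :
  ~ realizes M a p -> exists psi, p psi = 0 /\ eval M psi a < -1.
Proof.
  intros Hna. apply not_all_ex_not in Hna. destruct Hna as [phi Hphi].
  set (d := eval M phi a - p phi).
  assert (Hd : d <> 0) by (unfold d; intro; apply Hphi; lra).
  exists (fscale (-2 / d) (fadd phi (fscale (- p phi) fone))). split.
  - rewrite (type_scale _ _ _ p_type), (type_add _ _ _ p_type), (type_scale _ _ _ p_type),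
      (type_one _ _ _ p_type). ring.
  - simpl. replace (-2 / d * (eval M phi a + - p phi * 1)) with (-2) by (unfold d; field; auto).
    lra.
Qed.

End Extreme.

End Supports.

Lemma tuple_open_eval_lt {L} (M : structure L) n (psi : formula L n) c :
  tuple_open L M (fun b => eval M psi b < c).
Proof.
  intros a Ha. destruct (eval_lipschitz L M n psi) as [C [HC Hlip]].
  set (g := c - eval M psi a).
  assert (Hg : 0 < g) by (unfold g; lra).
  exists (g / (C + 1)). split; [apply Rdiv_lt_0_compat; lra|].
  intros b Hb.
  assert (A : Rabs (eval M psi a - eval M psi b) <= C * (g / (C + 1))).
  { apply Hlip; [left; apply Rdiv_lt_0_compat; lra|]. intro j. left. apply Hb. }
  assert (C * (g / (C + 1)) < g).
  { apply (Rmult_lt_reg_l (C + 1)); [lra|].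
    replace ((C + 1) * (C * (g / (C + 1)))) with (C * g) by (field; lra). nra. }
  apply Rabs_le_between in A. unfold g in *. lra.
Qed.

Theorem mainTheorem18 :
  forall (L : language) (T : theory L) (M : structure L),
    complete_theory T -> models M T -> compact_structure M ->
    forall (n : nat) (p : formula L n -> R),
      extreme_type T n p ->
      exists a : Fin.t n -> M, realizes M a p.
Proof.
  intros L T M HT HM Hcompact n p Hp. apply NNPP. intro Hunrealized.
  set (U := fun (psi : {psi : formula L n | p psi = 0}) b => eval M (proj1_sig psi) b < -1).
  destruct (compact_tuples L M Hcompact n _ U) as [l Hcover].
  - intro psi. apply tuple_open_eval_lt.
  - intro a. destruct (unrealized_witness L T M n p Hp a) as [psi [H0 Hlt]]; [eauto|].
    exists (exist _ psi H0). exact Hlt.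
  - destruct (extreme_supported_list L T M n HT HM p Hp _ U l) as [[psi Hpsi] [_ Hsupp]].
    + eapply supported_mono; [apply (type_supported_all L T M n HT HM p), Hp|].
      intros b _. apply Hcover.
    + assert (p psi <= -1) by (apply Hsupp; intros b Hb; exact (Rlt_le _ _ Hb)).
      simpl in *. lra.
Qed.
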